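(* Let $h_i$ be a strictly convex regularizer on $\mathcal{X}_i$ such that $\nabla h_i^*(y_i)>\mathbf{0}$ (coordinatewise) for all $y_i$. Then the map $g_i(x_i)=\nabla h_i(x_i)-[\nabla h_i(x_i)]_1\cdot\mathbf{1}$ is a bijection between the relative interior of $\mathcal{X}_i$ and $\mathcal{Y}_i=\{y_i\in\mathbb{R}^{S_i}: y_{i1}=0\}$.
   Context: $\mathcal{X}_i=\{x_i\in\mathbb{R}^{S_i}_{\ge0}:\sum_{s}x_{is}=1\}$ is the probability simplex; $\mathbf{1}$ is the all-ones vector and $[v]_1$ the first coordinate of $v$. $h_i$ is strictly convex and differentiable on the relative interior of $\mathcal{X}_i$ (gradient taken in $\mathbb{R}^{S_i}$); the learning rate is absorbed into $h_i$. Its convex conjugate is $h_i^*(y_i)=\sup_{x_i\in\mathcal{X}_i}\{\langle y_i,x_i\rangle-h_i(x_i)\}$, and $\nabla h_i^*(y_i)=\arg\max_{x_i\in\mathcal{X}_i}\{\langle y_i,x_i\rangle-h_i(x_i)\}$. *)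

From HB Require Import structures.
From mathcomp Require Import all_boot all_order all_algebra.
From mathcomp Require Import all_classical all_reals all_analysis.
Set Implicit Arguments. Unset Strict Implicit. Unset Printing Implicit Defensive.
Import Order.TTheory GRing.Theory Num.Theory.
Import numFieldNormedType.Exports.
Local Open Scope classical_set_scope.
Local Open Scope ring_scope.

Section Defs.
Variables (R : realType) (n : nat).

Definition dotv (y x : 'rV[R]_n) : R := \sum_(s < n) y 0 s * x 0 s.

Definition simplex : set 'rV[R]_n :=
  [set x | (forall s, 0 <= x 0 s) /\ \sum_(s < n) x 0 s = 1].

Definition relint_simplex : set 'rV[R]_n :=
  [set x | (forall s, 0 < x 0 s) /\ \sum_(s < n) x 0 s = 1].

Definition strictly_convex_on_simplex (h : 'rV[R]_n -> R) : Prop :=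
  forall x y t, x \in simplex -> y \in simplex -> x != y -> 0 < t < 1 ->
    h (t *: x + (1 - t) *: y) < t * h x + (1 - t) * h y.

Definition grad (h : 'rV[R]_n -> R) (x : 'rV[R]_n) : 'rV[R]_n :=
  \row_j ('d h x (delta_mx 0 j : 'rV[R]_n)).

(* x = grad h^*(y), i.e. x is the argmax over the simplex of <y,x> - h x. *)
Definition conj_argmax (h : 'rV[R]_n -> R) (y x : 'rV[R]_n) : Prop :=
  x \in simplex /\
  forall z, z \in simplex -> dotv y z - h z <= dotv y x - h x.

End Defs.

Definition gmap (R : realType) (n : nat) (h : 'rV[R]_n.+1 -> R)
  (x : 'rV[R]_n.+1) : 'rV[R]_n.+1 :=
  grad h x - (grad h x 0 ord0) *: const_mx 1.

Definition Yset (R : realType) (n : nat) : set 'rV[R]_n.+1 :=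
  [set y | y 0 ord0 = 0].

From HB Require Import structures.
From mathcomp Require Import all_boot all_order all_algebra.
From mathcomp Require Import all_classical all_reals all_analysis.
From mathcomp Require Import ring lra.
Import Order.TTheory GRing.Theory Num.Theory.
Import numFieldNormedType.Exports.
Local Open Scope classical_set_scope.
Local Open Scope ring_scope.
Set Implicit Arguments. Unset Strict Implicit.

(* On directions u tangent to the simplex (sum u = 0) the derivative of h at x
   is <g x, u>, since g x differs from grad h x by a multiple of 1.
   Injectivity: if g a = g b with a <> b, the strict first-order convexity
   inequalities at a along b - a and at b along a - b add up to 0 < 0.
   Surjectivity: for y with y_1 = 0 the maximiser x of <y, .> - h over the
   simplex is interior by hypothesis, so first-order optimality in the
   tangent directions +-(e_j - e_1) gives g x _j = y_j - y_1 = y_j. *)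

Section DotProduct.
Variables (R : realType) (n : nat).
Implicit Types (x y u : 'rV[R]_n).

Lemma dotvDr y x u : dotv y (x + u) = dotv y x + dotv y u.
Proof. by rewrite /dotv -big_split; apply: eq_bigr => s _; rewrite mxE mulrDr. Qed.

Lemma dotvZr y x (t : R) : dotv y (t *: x) = t * dotv y x.
Proof. by rewrite /dotv mulr_sumr; apply: eq_bigr => s _; rewrite mxE mulrCA. Qed.

Lemma dotvNr y x : dotv y (- x) = - dotv y x.
Proof. by rewrite -scaleN1r dotvZr mulN1r. Qed.

Lemma dotvBr y x u : dotv y (x - u) = dotv y x - dotv y u.
Proof. by rewrite dotvDr dotvNr. Qed.

Lemma dotv_delta y (j : 'I_n) : dotv y (delta_mx 0 j) = y 0 j.
Proof.
rewrite /dotv (bigD1 j) //= big1 ?addr0 => [|s /negbTE sj].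
  by rewrite mxE !eqxx mulr1.
by rewrite mxE sj andbF mulr0.
Qed.

Lemma sum_row_dotv u : \sum_(s < n) u 0 s = dotv (const_mx 1) u.
Proof. by apply: eq_bigr => s _; rewrite mxE mul1r. Qed.

End DotProduct.

Section Simplex.
Variables (R : realType) (n : nat).
Implicit Types (x u : 'rV[R]_n).

Lemma relint_simplex_sub : @relint_simplex R n `<=` @simplex R n.
Proof. by move=> x [x_gt0 x_sum]; split=> // s; exact/ltW. Qed.

Lemma simplex_convex x u (t : R) :
  x \in @simplex R n -> u \in @simplex R n -> 0 <= t <= 1 ->
  t *: x + (1 - t) *: u \in @simplex R n.
Proof.
rewrite !inE => -[x_ge0 x_sum] [u_ge0 u_sum] /andP[t_ge0 t_le1]; split=> [s|].
  by rewrite !mxE addr_ge0 // mulr_ge0 // subr_ge0.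
under eq_bigr do rewrite !mxE.
by rewrite big_split /= -!mulr_sumr x_sum u_sum !mulr1 addrC subrK.
Qed.

Lemma simplex_sumB x u :
  x \in @simplex R n -> u \in @simplex R n -> \sum_(s < n) (x - u) 0 s = 0.
Proof.
rewrite !inE => -[_ x_sum] [_ u_sum].
by rewrite sum_row_dotv dotvBr -!sum_row_dotv x_sum u_sum subrr.
Qed.

Lemma relint_simplex_nearD x u :
  @relint_simplex R n x -> \sum_(s < n) u 0 s = 0 ->
  \forall t \near 0, x + t *: u \in @simplex R n.
Proof.
move=> [x_gt0 x_sum] u_sum.
have : \forall t \near 0, forall s, 0 < x 0 s + t * u 0 s.
  apply: (@filter_forall R _ (fun s t => 0 < x 0 s + t * u 0 s) (nbhs (0 : R))).
  move=> s; apply: (cvgr_gt (x 0 s)); last exact: x_gt0.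
  have : x 0 s + t * u 0 s @[t --> (0 : R)] --> x 0 s + 0 * u 0 s.
    by apply: cvgD; [exact: cvg_cst | apply: cvgMl; exact: cvg_id].
  by rewrite mul0r addr0.
apply: filterS => t pos; rewrite inE; split=> [s|]; first by rewrite !mxE ltW.
under eq_bigr do rewrite !mxE.
by rewrite big_split /= -mulr_sumr x_sum u_sum mulr0 addr0.
Qed.

End Simplex.

Section DirectionalDerivative.
Variables (R : realType) (n : nat) (f : 'rV[R]_n -> R) (a v : 'rV[R]_n).
Hypothesis df : differentiable f a.

Lemma diff_quotient_at_right :
  t^-1 * (f (a + t *: v) - f a) @[t --> 0^'+] --> 'd f a v.
Proof.
have /cvgP := diff_derivable df (v := v).
rewrite -/(derive f a v) deriveE // => /cvg_dnbhs_at_right.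
apply: cvg_trans; apply: near_eq_cvg; near=> t.
by rewrite /= [t *: v + a]addrC.
Unshelve. all: by end_near. Qed.

Lemma diff_le_near (c : R) :
  (\forall t \near 0^'+, f (a + t *: v) - f a <= t * c) -> 'd f a v <= c.
Proof.
move=> near_le; apply: cvgr_to_le diff_quotient_at_right _.
near=> t; have t_gt0 : 0 < t by near: t; exact: nbhs_right_gt.
by rewrite ler_pdivrMl //; near: t.
Unshelve. all: by end_near. Qed.

Lemma diff_ge_near (c : R) :
  (\forall t \near 0^'+, t * c <= f (a + t *: v) - f a) -> c <= 'd f a v.
Proof.
move=> near_ge; apply: cvgr_to_ge diff_quotient_at_right _.
near=> t; have t_gt0 : 0 < t by near: t; exact: nbhs_right_gt.
by rewrite ler_pdivlMl //; near: t.
Unshelve. all: by end_near. Qed.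

End DirectionalDerivative.

Lemma diff_dotv_grad (R : realType) (n : nat) (h : 'rV[R]_n -> R) (x v : 'rV[R]_n) :
  'd h x v = dotv (grad h x) v.
Proof.
rewrite {1}(row_sum_delta v) linear_sum; apply: eq_bigr => j _.
by rewrite linearZ /grad mxE mulrC.
Qed.

Section StrictConvexity.
Variables (R : realType) (n : nat) (h : 'rV[R]_n -> R).
Hypothesis h_conv : strictly_convex_on_simplex h.

Lemma convex_on_simplex a b t :
  a \in @simplex R n -> b \in @simplex R n -> 0 <= t <= 1 ->
  h (t *: a + (1 - t) *: b) <= t * h a + (1 - t) * h b.
Proof.
move=> a_simplex b_simplex /andP[t_ge0 t_le1].
have [->|a_neq_b] := eqVneq a b.
  by rewrite -scalerDl -mulrDl addrC subrK scale1r mul1r.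
have [->|t_neq0] := eqVneq t 0.
  by rewrite !(scale0r, mul0r, add0r, subr0, scale1r, mul1r).
have [->|t_neq1] := eqVneq t 1.
  by rewrite !(subrr, scale0r, mul0r, addr0, scale1r, mul1r).
by apply/ltW/h_conv; rewrite // lt0r t_neq0 t_ge0 lt_neqAle t_neq1 t_le1.
Qed.

(* Difference quotients only bound the derivative weakly; the strict gap comes
   from strict convexity at the midpoint m of a and b. *)
Lemma strictly_convex_diff_lt a b :
  a \in @simplex R n -> b \in @simplex R n -> a != b -> differentiable h a ->
  'd h a (b - a) < h b - h a.
Proof.
move=> a_simplex b_simplex a_neq_b da.
pose m := 2^-1 *: b + (1 - 2^-1) *: a.
have m_simplex : m \in @simplex R n by apply: simplex_convex => //; lra.
have hm_lt : h m < 2^-1 * h b + (1 - 2^-1) * h a.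
  by apply: h_conv => //; [rewrite eq_sym | lra].
suff : 'd h a (b - a) <= 2 * (h m - h a) by lra.
apply: diff_le_near => //; near=> t.
have t_gt0 : 0 < t by near: t; exact: nbhs_right_gt.
have t_lt : t < 2^-1 by near: t; apply: nbhs_right_lt; lra.
have -> : a + t *: (b - a) = (2 * t) *: m + (1 - 2 * t) *: a.
  by apply/rowP => i; rewrite !mxE; field.
have two_t : 0 <= 2 * t <= 1 by apply/andP; split; lra.
have := convex_on_simplex m_simplex a_simplex two_t; lra.
Unshelve. all: by end_near. Qed.

End StrictConvexity.

Lemma conj_argmax_diff (R : realType) (n : nat) (h : 'rV[R]_n -> R) (y x u : 'rV[R]_n) :
  conj_argmax h y x -> relint_simplex x -> differentiable h x ->
  \sum_(s < n) u 0 s = 0 -> 'd h x u = dotv y u.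
Proof.
move=> [_ x_max] x_relint dx u_sum.
have diff_ge (w : 'rV[R]_n) : \sum_(s < n) w 0 s = 0 -> dotv y w <= 'd h x w.
  move=> w_sum; apply: diff_ge_near => //; near=> t.
  have : x + t *: w \in @simplex R n.
    by near: t; apply: cvg_within; exact: relint_simplex_nearD.
  by move/x_max; rewrite dotvDr dotvZr; lra.
apply/eqP; rewrite eq_le diff_ge // andbT -lerN2 -linearN -dotvNr diff_ge //.
by rewrite sum_row_dotv dotvNr -sum_row_dotv u_sum oppr0.
Unshelve. all: by end_near. Qed.

Section GradientMap.
Variables (R : realType) (n : nat) (h : 'rV[R]_n.+1 -> R).
Implicit Types (x u : 'rV[R]_n.+1).

Lemma gmapE x j : gmap h x 0 j = grad h x 0 j - grad h x 0 ord0.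
Proof. by rewrite !mxE mulr1. Qed.

Lemma gmap_Yset x : Yset (gmap h x).
Proof. by rewrite /Yset /= gmapE subrr. Qed.

Lemma diff_dotv_gmap x u :
  \sum_(s < n.+1) u 0 s = 0 -> 'd h x u = dotv (gmap h x) u.
Proof.
move=> u_sum; rewrite diff_dotv_grad /dotv.
under [RHS]eq_bigr do rewrite gmapE mulrBl.
by rewrite sumrB -mulr_sumr u_sum mulr0 subr0.
Qed.

Hypothesis h_diff : forall x, @relint_simplex R n.+1 x -> differentiable h x.

Lemma gmap_inj : strictly_convex_on_simplex h ->
  set_inj (@relint_simplex R n.+1) (gmap h).
Proof.
move=> h_conv a b; rewrite !inE => a_relint b_relint gab.
have [//|a_neq_b] := eqVneq a b; exfalso.
have a_simplex := mem_set (relint_simplex_sub a_relint).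
have b_simplex := mem_set (relint_simplex_sub b_relint).
have := strictly_convex_diff_lt h_conv a_simplex b_simplex a_neq_b (h_diff a_relint).
rewrite diff_dotv_gmap; last exact: simplex_sumB.
rewrite eq_sym in a_neq_b.
have := strictly_convex_diff_lt h_conv b_simplex a_simplex a_neq_b (h_diff b_relint).
rewrite diff_dotv_gmap; last exact: simplex_sumB.
by rewrite gab -[a - b]opprB dotvNr; lra.
Qed.

Lemma gmap_surj :
  (forall y, Yset y -> exists x, conj_argmax h y x /\ forall s, 0 < x 0 s) ->
  set_surj (@relint_simplex R n.+1) (@Yset R n) (gmap h).
Proof.
move=> h_argmax y y0; have [x [x_argmax x_gt0]] := h_argmax y y0.
have x_relint : relint_simplex x.
  by split=> //; move: x_argmax.1; rewrite inE => -[].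
exists x => //; apply/rowP => j.
have u_sum : \sum_(s < n.+1) (delta_mx 0 j - delta_mx 0 ord0 : 'rV[R]_n.+1) 0 s = 0.
  by rewrite sum_row_dotv dotvBr !dotv_delta !mxE subrr.
have := conj_argmax_diff x_argmax x_relint (h_diff x_relint) u_sum.
rewrite diff_dotv_gmap; last exact: u_sum.
by rewrite !dotvBr !dotv_delta gmap_Yset y0 !subr0.
Qed.

End GradientMap.

Theorem lemma1 (R : realType) (n : nat) (h : 'rV[R]_n.+1 -> R) :
  strictly_convex_on_simplex h ->
  (forall x, @relint_simplex R n.+1 x -> differentiable h x) ->
  (forall y : 'rV[R]_n.+1, exists x, conj_argmax h y x /\ forall s, 0 < x 0 s) ->
  set_bij (@relint_simplex R n.+1) (@Yset R n) (gmap h).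
Proof.
move=> h_conv h_diff h_argmax; split.
- by move=> x _; exact: gmap_Yset.
- exact: gmap_inj.
- by apply: gmap_surj => // y _; exact: h_argmax.
Qed.
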